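(* Assume (A1)–(A3) below. Then for each instrument $\ell\in\{1,\dots,L\}$, $$\mathrm{Wald}_\ell=\sum_{t\in\mathcal T}\mathrm{LATE}_t\,\alpha_t(\ell),\qquad \sum_{t\in\mathcal T}\alpha_t(\ell)=1,$$ where $\alpha_t(\ell)=\theta_t\,\varphi_t(\ell)/\pi_\ell$ and $$\varphi_t(\ell)=\sum_{z_{-\ell}\in\{0,1\}^{L-1}}\bigl[t(1,z_{-\ell})\,q_\ell(z_{-\ell})-t(0,z_{-\ell})\,q^0_\ell(z_{-\ell})\bigr].$$
   Context: We observe i.i.d. draws of $(Y_i,D_i,Z_{1i},\dots,Z_{Li})$ with $Y_i\in\mathbb R$, $D_i\in\{0,1\}$ and $L\ge2$ binary instruments $Z_{\ell i}\in\{0,1\}$; $\mathbf Z_i=(Z_{1i},\dots,Z_{Li})'$. Each unit has potential outcomes $Y_i(0),Y_i(1)$ and a potential treatment function (its ''compliance type'') $D_i(\cdot):\{0,1\}^L\to\{0,1\}$; observed $D_i=D_i(\mathbf Z_i)$ and $Y_i=D_iY_i(1)+(1-D_i)Y_i(0)$. $\mathcal T$ is the set of compliance types, $\theta_t=P(D_i(\cdot)=t)$, $\mathrm{LATE}_t=\mathbb E[Y_i(1)-Y_i(0)\mid D_i(\cdot)=t]$. For a type $t$, $t(z_\ell,z_{-\ell})$ denotes its treatment decision at instrument value with $\ell$-th coordinate $z_\ell$ and remaining coordinates $z_{-\ell}$. Let $p_\ell=P(Z_{\ell i}=1)$, $\pi_\ell=\mathbb E[D_i\mid Z_{\ell i}=1]-\mathbb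 E[D_i\mid Z_{\ell i}=0]$, $\rho_\ell=\mathbb E[Y_i\mid Z_{\ell i}=1]-\mathbb E[Y_i\mid Z_{\ell i}=0]$, $\mathrm{Wald}_\ell=\rho_\ell/\pi_\ell$, $\Sigma_Z=\mathrm{Var}(\mathbf Z_i)$. With $Z_{-\ell}$ the vector of the other $L-1$ instruments, $q_\ell(z_{-\ell})=P(Z_{-\ell}=z_{-\ell}\mid Z_\ell=1)$ and $q^0_\ell(z_{-\ell})=P(Z_{-\ell}=z_{-\ell}\mid Z_\ell=0)$. Assumptions: (A1) $(Y_i(0),Y_i(1),D_i(\cdot))$ is independent of $\mathbf Z_i$. (A2) For every $i$, $D_i(z)$ is nondecreasing in each coordinate $z_k$, $k=1,\dots,L$. (A3) $p_\ell>0$ and $\pi_\ell>0$ for each $\ell$, and $\Sigma_Z$ is positive definite. *)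

From HB Require Import structures.
From mathcomp Require Import all_boot all_order all_algebra.
From mathcomp Require Import all_classical all_reals all_analysis.
Set Implicit Arguments. Unset Strict Implicit. Unset Printing Implicit Defensive.
Import Order.TTheory GRing.Theory Num.Theory.
Local Open Scope classical_set_scope.
Local Open Scope ring_scope.

Section IVModel.
Context {d : measure_display} {T : measurableType d} {R : realType}
  (P : probability T R) (L : nat).

(* instrument values z in {0,1}^L, and compliance types {0,1}^L -> {0,1} *)
Notation Zval := {ffun 'I_L -> bool}.
Notation ctype := {ffun Zval -> bool}.

Variables (Y0 Y1 : T -> R) (Tp : T -> ctype) (Z : T -> Zval).

Definition Dobs (w : T) : bool := Tp w (Z w).
Definition Yobs (w : T) : R := if Dobs w then Y1 w else Y0 w.

Definition pr (A : set T) : R := fine (P A).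
Definition condE (X : T -> R) (A : set T) : R :=
  fine (\int[P]_(w in A) (X w)%:E) / pr A.

Definition Zl1 (l : 'I_L) : set T := [set w | Z w l].
Definition Zl0 (l : 'I_L) : set T := [set w | ~~ Z w l].

Definition p_ (l : 'I_L) : R := pr (Zl1 l).
Definition pi_ (l : 'I_L) : R :=
  condE (fun w => (Dobs w)%:R) (Zl1 l) - condE (fun w => (Dobs w)%:R) (Zl0 l).
Definition rho_ (l : 'I_L) : R := condE Yobs (Zl1 l) - condE Yobs (Zl0 l).
Definition Wald (l : 'I_L) : R := rho_ l / pi_ l.

Definition theta (t : ctype) : R := pr [set w | Tp w = t].
Definition LATE (t : ctype) : R := condE (fun w => Y1 w - Y0 w) [set w | Tp w = t].

(* z with its l-th coordinate set to b: the instrument value (b, z_{-l}) *)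
Definition setc (z : Zval) (l : 'I_L) (b : bool) : Zval :=
  [ffun j => if j == l then b else z j].

(* q_l(z_{-l}) = P(Z_{-l} = z_{-l} | Z_l = 1), q^0_l(z_{-l}) = P(Z_{-l} = z_{-l} | Z_l = 0);
   only the coordinates of z other than l matter *)
Definition q_ (l : 'I_L) (z : Zval) : R :=
  pr [set w | Z w l /\ forall j, j != l -> Z w j = z j] / pr (Zl1 l).
Definition q0_ (l : 'I_L) (z : Zval) : R :=
  pr [set w | ~~ Z w l /\ forall j, j != l -> Z w j = z j] / pr (Zl0 l).

(* the sum over z_{-l} in {0,1}^(L-1) is indexed by the z in {0,1}^L with z_l = 0 *)
Definition phi (t : ctype) (l : 'I_L) : R :=
  \sum_(z : Zval | ~~ z l)
    ((t (setc z l true))%:R * q_ l z - (t (setc z l false))%:R * q0_ l z).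

Definition alpha (t : ctype) (l : 'I_L) : R := theta t * phi t l / pi_ l.

Definition SigmaZ : 'M[R]_L :=
  \matrix_(i, j) fine (covariance P (fun w => (Z w i)%:R) (fun w => (Z w j)%:R)).

Definition posdef (M : 'M[R]_L) : Prop :=
  forall v : 'rV[R]_L, v != 0 -> 0 < (v *m M *m v^T) 0 0.

(* (A1): (Y(0), Y(1), D(.)) independent of Z (product rule on generating rectangles) *)
Definition indepA1 : Prop :=
  forall (B0 B1 : set R) (t : ctype) (z : Zval), measurable B0 -> measurable B1 ->
    P ([set w | B0 (Y0 w) /\ B1 (Y1 w) /\ Tp w = t] `&` [set w | Z w = z]) =
    (P [set w | B0 (Y0 w) /\ B1 (Y1 w) /\ Tp w = t] * P [set w | Z w = z])%E.

Definition monotoneA2 : Prop :=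
  forall (w : T) (z : Zval) (k : 'I_L), (Tp w z <= Tp w (setc z k true))%N.

End IVModel.

From HB Require Import structures.
From mathcomp Require Import all_boot all_order all_algebra.
From mathcomp Require Import all_classical all_reals all_analysis.
From mathcomp Require Import measurable_realfun ring.
Set Implicit Arguments. Unset Strict Implicit. Unset Printing Implicit Defensive.
Import Order.TTheory GRing.Theory Num.Theory.
Local Open Scope classical_set_scope.
Local Open Scope ring_scope.

(* Split the sample space into the cells {D(.) = t, Z = z}.  For a pair of
   potential quantities V(0), V(1) that is independent of Z jointly with the
   compliance type, V(D) equals V(t z) on the cell (t, z), so its integral there
   factorises as P(Z = z) E[V(t z); D(.) = t].  Writing
   E[V(t z); t] = E[V(0); t] + t(z) (E[V(1); t] - E[V(0); t]), summing over the
   cells with z_l = 1, resp. z_l = 0, and normalising, the E[V(0); t] terms cancel: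
     E[V(D) | Z_l = 1] - E[V(D) | Z_l = 0] = sum_t (E[V(1); t] - E[V(0); t]) phi_t(l).
   With V = Y this is rho_l = sum_t theta_t LATE_t phi_t(l), with V(b) = b it is
   pi_l = sum_t theta_t phi_t(l), and dividing gives both claims. *)

Section finite_partition.
Context d (T : measurableType d) (R : realType) (mu : {measure set T -> \bar R}).
Context (I : finType) (g : T -> I) (mg : forall i, measurable (g @^-1` [set i])).

Lemma measurable_preimage_fin (A : set I) : measurable (g @^-1` A).
Proof.
have -> : g @^-1` A = \big[setU/set0]_(i <- index_enum I | `[< A i >]) g @^-1` [set i].
  rewrite -bigcup_seq_cond; apply/seteqP; split => [w Aw | w [i /andP[_ /asboolP Ai] gwi]].
  - by exists (g w) => //=; rewrite mem_index_enum; apply/asboolP.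
  - by rewrite /preimage /= gwi.
exact: bigsetU_measurable.
Qed.

Lemma integral_fibers (S : set T) (f : T -> R) : measurable S ->
  measurable_fun S (EFin \o f) ->
  (\int[mu]_(x in S) (f x)%:E = \sum_(i : I) \int[mu]_(x in S `&` g @^-1` [set i]) (f x)%:E)%E.
Proof.
move=> mS mf.
have SE : S = \big[setU/set0]_(i <- index_enum I) (S `&` g @^-1` [set i]).
  rewrite -bigcup_seq; apply/seteqP; split => [w Sw | w [i _ []]] //.
  by exists (g w) => //=; rewrite mem_index_enum.
rewrite [in LHS]SE integral_bigsetU_EFin ?index_enum_uniq -?SE //.
- by move=> i; exact: measurableI.
- apply/trivIsetP => i j _ _ /eqP ij; apply/seteqP; split => // w [[_ gwi] [_ gwj]].
  by apply: ij; rewrite -gwi -gwj.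
Qed.

Lemma measure_fibers (S : set T) : measurable S ->
  mu S = (\sum_(i : I) mu (S `&` g @^-1` [set i]))%E.
Proof.
have intE (A : set T) : measurable A -> (\int[mu]_(x in A) (cst 1 x)%:E = mu A)%E.
  by move=> mA; rewrite (integral_cst mu mA 1%:E) mul1e.
move=> mS; rewrite -intE // integral_fibers //; last exact/measurable_EFinP/measurable_cst.
by apply: eq_bigr => i _; rewrite intE //; exact: measurableI.
Qed.

End finite_partition.

Section integral_independent.
Context d (T : measurableType d) (R : realType) (mu : {finite_measure set T -> \bar R}).
Local Open Scope ereal_scope.

Lemma ge0_integral_pushforward_mrestr (S : set T) (mS : measurable S) (Y : T -> R)
    (h : R -> \bar R) : measurable_fun setT Y -> measurable_fun setT h ->
    (forall x, 0 <= h x) ->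
  \int[mu]_(w in S) (h \o Y) w = \int[pushforward (mrestr mu mS) Y]_x h x.
Proof.
move=> mY mh h0.
rewrite ge0_integral_pushforward // ?preimage_setT.
rewrite -(setUv S) ge0_integral_setU //; last 4 first.
- exact: measurableC.
- by rewrite setUv; exact: measurableT_comp.
- by move=> x _; exact: h0.
- exact/disj_set2P/setICr.
rewrite (@null_set_integral _ _ _ _ (~` S)) ?adde0; last 3 first.
- exact: measurableC.
- by apply: measurable_funTS; exact: measurableT_comp.
- by change (mu (~` S `&` S) = 0); rewrite setICl measure0.
by apply: eq_measure_integral => A mA AS; rewrite /= /mrestr setIidl.
Qed.

Lemma integral_setI_indep (Y : T -> R) (A E : set T) :
  measurable_fun setT Y -> measurable A -> measurable E ->
  mu.-integrable A (EFin \o Y) ->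
  (forall B, measurable B -> mu (Y @^-1` B `&` A `&` E) = mu (Y @^-1` B `&` A) * mu E) ->
  \int[mu]_(w in A `&` E) (Y w)%:E = mu E * \int[mu]_(w in A) (Y w)%:E.
Proof.
move=> mY mA mE iY indep.
pose c : {nonneg R} := NngNum (fine_ge0 (measure_ge0 mu E)).
have cE : (c%:num)%:E = mu E by rewrite /= fineK // fin_num_measure.
have ge0_case (h : R -> \bar R) : measurable_fun setT h -> (forall x, 0 <= h x) ->
    \int[mu]_(w in A `&` E) (h \o Y) w = mu E * \int[mu]_(w in A) (h \o Y) w.
  move=> mh h0.
  rewrite (ge0_integral_pushforward_mrestr (measurableI _ _ mA mE)) //.
  rewrite (ge0_integral_pushforward_mrestr mA) // -cE -ge0_integral_mscale //.
  apply: eq_measure_integral => B mB _.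
  change (mu (Y @^-1` B `&` (A `&` E)) = c%:num%:E * mu (Y @^-1` B `&` A)).
  by rewrite setIA indep // cE muleC.
rewrite integralE [X in _ = _ * X]integralE funepos_comp funeneg_comp.
rewrite !ge0_case //; [|exact: measurable_funeneg|exact: measurable_funepos].
rewrite [RHS]muleBr ?fin_num_measure //.
apply: fin_num_adde_defl; rewrite fin_numN -funeneg_comp.
by apply: integrable_fin_num => //; exact: integrable_funeneg.
Qed.

End integral_independent.

Lemma posdef_diag_gt0 (R : realType) (L : nat) (M : 'M[R]_L) (l : 'I_L) :
  posdef M -> 0 < M l l.
Proof.
have e_l_neq0 : delta_mx 0 l != 0 :> 'rV[R]_L.
  by apply/eqP => /matrixP/(_ 0 l)/eqP; rewrite !mxE !eqxx oner_eq0.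
by move=> /(_ _ e_l_neq0); rewrite trmx_delta -rowE -colE !mxE.
Qed.

Lemma covariance_indic_full d (T : measurableType d) (R : realType) (P : probability T R)
    (A : set T) : measurable A -> P A = 1%E -> covariance P (\1_A) (\1_A) = 0%E.
Proof.
move=> mA PA1; rewrite unlock expectation_indic // PA1 /=.
have -> : ((\1_A \- cst 1) * (\1_A \- cst 1))%R = \1_(~` A) :> (T -> R).
  apply/funext => w; rewrite mulrfctE /= !indicE in_setC.
  by case: (w \in A) => /=; ring.
rewrite expectation_indic; last exact: measurableC.
by rewrite probability_setC // PA1 subee.
Qed.

Section instrument_values.
Context (L : nat).
Local Notation Zval := {ffun 'I_L -> bool}.
Implicit Types (z x : Zval) (l : 'I_L) (b : bool).

Lemma setc_at z l b : setc z l b l = b.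
Proof. by rewrite ffunE eqxx. Qed.

Lemma setc_id z l b : z l = b -> setc z l b = z.
Proof. by move=> zl; apply/ffunP => j; rewrite ffunE; case: eqP => // ->. Qed.

Lemma setc_setc z l b c : setc (setc z l b) l c = setc z l c.
Proof. by apply/ffunP => j; rewrite !ffunE; case: eqP. Qed.

Lemma eq_setc x z l b : x = setc z l b <-> x l = b /\ forall j, j != l -> x j = z j.
Proof.
split=> [-> | [xl xz]]; first by split=> [|j /negbTE jl]; rewrite ffunE ?eqxx ?jl.
by apply/ffunP => j; rewrite ffunE; case: eqVneq => [->|/xz].
Qed.

Lemma sum_setc_true (V : nmodType) l (F : Zval -> V) :
  \sum_(z : Zval | ~~ z l) F (setc z l true) = \sum_(z : Zval | z l) F z.
Proof.
pose flip z := setc z l (~~ z l).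
have flipK : involutive flip.
  by move=> z; rewrite /flip setc_setc (setc_at z) negbK setc_id.
rewrite [RHS](reindex_inj (inv_inj flipK)) /=.
by apply: eq_big => [z | z /negbTE zl]; rewrite /flip ?(setc_at z) ?zl.
Qed.

End instrument_values.

Section first_stage_weights.
Context d (T : measurableType d) (R : realType) (P : probability T R) (L : nat)
  (Z : T -> {ffun 'I_L -> bool}).
Local Notation Zval := {ffun 'I_L -> bool}.

Lemma q_E l z : q_ P Z l z = pr P [set w | Z w = setc z l true] / pr P (Zl1 Z l).
Proof. by congr (pr P _ / _); apply/seteqP; split => w /eq_setc. Qed.

Lemma q0_E l z : q0_ P Z l z = pr P [set w | Z w = setc z l false] / pr P (Zl0 Z l).
Proof.
congr (pr P _ / _); apply/seteqP; split => w /=.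
- by move=> [/negbTE zl zz]; apply/eq_setc.
- by move=> /eq_setc[-> zz].
Qed.

Lemma phiE (t : {ffun Zval -> bool}) l : phi P Z t l =
  (\sum_(z : Zval | z l) (t z)%:R * pr P [set w | Z w = z]) / pr P (Zl1 Z l) -
  (\sum_(z : Zval | ~~ z l) (t z)%:R * pr P [set w | Z w = z]) / pr P (Zl0 Z l).
Proof.
rewrite /phi sumrB !mulr_suml -sum_setc_true.
congr (_ - _); apply: eq_bigr => z zl; rewrite ?q_E ?q0_E ?mulrA //.
by rewrite setc_id //; exact/negbTE.
Qed.

End first_stage_weights.

Section potential_outcomes.
Context d (T : measurableType d) (R : realType) (P : probability T R) (L : nat)
  (Tp : T -> {ffun {ffun 'I_L -> bool} -> bool}) (Z : T -> {ffun 'I_L -> bool}).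
Hypotheses (mTp : forall t, measurable [set w | Tp w = t])
  (mZ : forall z, measurable [set w | Z w = z]).
Local Notation Zval := {ffun 'I_L -> bool}.
Local Notation ctype := {ffun Zval -> bool}.

Definition type_instrument (w : T) : ctype * Zval := (Tp w, Z w).

Lemma type_instrument_fiberE i :
  type_instrument @^-1` [set i] = [set w | Tp w = i.1] `&` [set w | Z w = i.2].
Proof.
by case: i => t z; rewrite /type_instrument; apply/seteqP; split => w /= [<- <-].
Qed.

Lemma measurable_type_instrument_fiber i : measurable (type_instrument @^-1` [set i]).
Proof. by rewrite type_instrument_fiberE; exact: measurableI. Qed.

Lemma measurable_instrument_event (b : pred Zval) : measurable [set w | b (Z w)].
Proof. exact: (measurable_preimage_fin mZ [set z | b z]). Qed.

Definition obs (V : bool -> T -> R) (w : T) : R := V (Dobs Tp Z w) w.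

Definition mean_on_type (V : bool -> T -> R) (t : ctype) (b : bool) : R :=
  fine (\int[P]_(w in [set w | Tp w = t]) (V b w)%:E).

Definition instrument_independent (V : bool -> T -> R) : Prop :=
  forall b t z B, measurable B ->
    P (V b @^-1` B `&` [set w | Tp w = t] `&` [set w | Z w = z]) =
    (P (V b @^-1` B `&` [set w | Tp w = t]) * P [set w | Z w = z])%E.

Lemma pr_instrument_event (b : pred Zval) :
  pr P [set w | b (Z w)] = \sum_(z : Zval | b z) pr P [set w | Z w = z].
Proof.
rewrite /pr (measure_fibers _ mZ); last exact: measurable_instrument_event.
rewrite sum_fine => [|z _]; last exact: fin_num_measure.
congr fine; rewrite [RHS]big_mkcond; apply: eq_bigr => z _; case: ifPn => bz.
  by congr (P _); apply/seteqP; split => [w [] | w zw] //=; split; rewrite //= zw.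
rewrite (_ : _ `&` _ = set0) ?measure0 //.
by apply/seteqP; split => // w /= [+ zw]; rewrite zw (negbTE bz).
Qed.

Section observed_quantity.
Variable V : bool -> T -> R.
Hypotheses (mV : forall b, measurable_fun setT (V b))
  (iV : forall b, P.-integrable setT (EFin \o V b))
  (indepV : instrument_independent V).

Lemma measurable_obs : measurable_fun setT (obs V).
Proof.
have -> : obs V = fun w => if Dobs Tp Z w then V true w else V false w.
  by apply/funext => w; rewrite /obs; case: (Dobs Tp Z w).
apply: measurable_fun_if => //; [|exact: measurable_funTS..].
apply: (measurable_fun_bool true); rewrite setTI.
exact: (measurable_preimage_fin measurable_type_instrument_fiber [set i : ctype * Zval | i.1 i.2]).
Qed.

Lemma fin_num_integral_on_type t b :
  (\int[P]_(w in [set w | Tp w = t]) (V b w)%:E)%E \is a fin_num.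
Proof. by apply: integrable_fin_num => //; exact: integrableS (iV b). Qed.

Lemma integral_obs_fiber t z :
  (\int[P]_(w in type_instrument @^-1` [set (t, z)]) (obs V w)%:E =
   P [set w | Z w = z] * \int[P]_(w in [set w | Tp w = t]) (V (t z) w)%:E)%E.
Proof.
rewrite type_instrument_fiberE /=.
transitivity (\int[P]_(w in [set w | Tp w = t] `&` [set w | Z w = z]) (V (t z) w)%:E)%E.
  by apply: eq_integral => w /[!inE] -[/= Ht Hz]; rewrite /obs /Dobs Ht Hz.
apply: integral_setI_indep => //; last exact: indepV.
exact: integrableS (iV _).
Qed.

Lemma Rintegral_obs_instrument_event (b : pred Zval) :
  fine (\int[P]_(w in [set w | b (Z w)]) (obs V w)%:E)%E =
  \sum_(t : ctype) \sum_(z : Zval | b z) pr P [set w | Z w = z] * mean_on_type V t (t z).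
Proof.
have mobs : measurable_fun [set w | b (Z w)] (EFin \o obs V).
  by apply/measurable_EFinP/measurable_funTS; exact: measurable_obs.
have termE (i : ctype * Zval) :
    (\int[P]_(w in [set w | b (Z w)] `&` type_instrument @^-1` [set i]) (obs V w)%:E =
     if b i.2 then P [set w | Z w = i.2] * \int[P]_(w in [set w | Tp w = i.1]) (V (i.1 i.2) w)%:E
     else 0)%E.
  case: i => t z /=; case: ifPn => bz; last first.
    rewrite (_ : _ `&` _ = set0) ?integral_set0 //.
    by apply/seteqP; split => // w [/= + [_ zw]]; rewrite zw (negbTE bz).
  rewrite -integral_obs_fiber; congr (integral _ _ _).
  by apply/seteqP; split => [w [] // | w fw]; split => //; move/(congr1 snd): fw => /= ->.
have fin_term i : (\int[P]_(w in [set w | b (Z w)] `&` type_instrument @^-1` [set i])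
    (obs V w)%:E)%E \is a fin_num.
  by rewrite termE; case: ifP => // _; rewrite fin_numM ?fin_num_measure ?fin_num_integral_on_type.
rewrite (integral_fibers _ measurable_type_instrument_fiber (measurable_instrument_event _) mobs).
under [RHS]eq_bigr do rewrite big_mkcond.
rewrite -sum_fine // pair_bigA /=; apply: eq_bigr => -[t z] _; rewrite termE /=.
case: ifP => // _.
by rewrite fineM ?fin_num_measure ?fin_num_integral_on_type.
Qed.

Lemma condE_obs_instrument_event (b : pred Zval) : pr P [set w | b (Z w)] != 0 ->
  condE P (obs V) [set w | b (Z w)] =
  \sum_(t : ctype) (mean_on_type V t false + (mean_on_type V t true - mean_on_type V t false) *
    (\sum_(z : Zval | b z) (t z)%:R * pr P [set w | Z w = z]) / pr P [set w | b (Z w)]).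
Proof.
move=> pr_neq0; rewrite /condE Rintegral_obs_instrument_event mulr_suml.
apply: eq_bigr => t _.
have -> : \sum_(z : Zval | b z) pr P [set w | Z w = z] * mean_on_type V t (t z) =
    mean_on_type V t false * pr P [set w | b (Z w)] +
    (mean_on_type V t true - mean_on_type V t false) *
    \sum_(z : Zval | b z) (t z)%:R * pr P [set w | Z w = z].
  rewrite pr_instrument_event !mulr_sumr -big_split /=.
  by apply: eq_bigr => z _; case: (t z) => /=; ring.
by rewrite mulrDl mulfK // mulrA.
Qed.

Lemma condE_obs_contrast l : pr P (Zl1 Z l) != 0 -> pr P (Zl0 Z l) != 0 ->
  condE P (obs V) (Zl1 Z l) - condE P (obs V) (Zl0 Z l) =
  \sum_(t : ctype) (mean_on_type V t true - mean_on_type V t false) * phi P Z t l.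
Proof.
move=> pr1_neq0 pr0_neq0.
rewrite (condE_obs_instrument_event (b := fun z => z l)) //.
rewrite (condE_obs_instrument_event (b := fun z => ~~ z l)) // -sumrB.
by apply: eq_bigr => t _; rewrite phiE; ring.
Qed.

End observed_quantity.
End potential_outcomes.

Lemma pr_Zl0_gt0 d (T : measurableType d) (R : realType) (P : probability T R) (L : nat)
    (Z : T -> {ffun 'I_L -> bool}) (l : 'I_L) :
  (forall z, measurable [set w | Z w = z]) -> posdef (SigmaZ P Z) -> 0 < pr P (Zl0 Z l).
Proof.
move=> mZ pd; have mZl0 := measurable_instrument_event mZ (fun z => ~~ z l).
rewrite lt0r fine_ge0 ?measure_ge0 // andbT; apply/negP => pr0.
have P0 : P (Zl0 Z l) = 0%E by apply/eqP; rewrite -fine_eq0 ?fin_num_measure.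
have PZl1 : P (Zl1 Z l) = 1%E.
  have -> : Zl1 Z l = ~` Zl0 Z l.
    by rewrite /Zl1 /Zl0; apply/seteqP; split => w /=; case: (Z w l) => // /(_ isT).
  by rewrite probability_setC // P0 sube0.
have indicE_Zl1 : (fun w => (Z w l)%:R) = \1_(Zl1 Z l) :> (T -> R).
  by apply/funext => w; rewrite indicE mem_setE.
have := posdef_diag_gt0 l pd; rewrite mxE indicE_Zl1 covariance_indic_full ?ltxx //.
exact: measurable_instrument_event mZ (fun z => z l).
Qed.

Section wald_estimand.
Context d (T : measurableType d) (R : realType) (P : probability T R) (L : nat)
  (Y0 Y1 : T -> R) (Tp : T -> {ffun {ffun 'I_L -> bool} -> bool})
  (Z : T -> {ffun 'I_L -> bool}).
Hypotheses (mY0 : measurable_fun setT Y0) (mY1 : measurable_fun setT Y1)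
  (mTp : forall t, measurable [set w | Tp w = t])
  (mZ : forall z, measurable [set w | Z w = z])
  (iY0 : P.-integrable setT (EFin \o Y0)) (iY1 : P.-integrable setT (EFin \o Y1))
  (indep : indepA1 P Y0 Y1 Tp Z).
Local Notation ctype := {ffun {ffun 'I_L -> bool} -> bool}.

Definition potential_outcome (b : bool) : T -> R := if b then Y1 else Y0.
Definition potential_treatment (b : bool) (_ : T) : R := b%:R.

Lemma YobsE : Yobs Y0 Y1 Tp Z = obs Tp Z potential_outcome.
Proof. by apply/funext => w; rewrite /Yobs /obs; case: (Dobs Tp Z w). Qed.

Lemma pr_type_instrument t z :
  P ([set w | Tp w = t] `&` [set w | Z w = z]) =
  (P [set w | Tp w = t] * P [set w | Z w = z])%E.
Proof.
have := @indep setT setT t z measurableT measurableT.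
rewrite (_ : [set w | _ /\ _ /\ _] = [set w | Tp w = t]) //.
by apply/seteqP; split => [w [_ []] | w].
Qed.

Lemma instrument_independent_outcome : instrument_independent P Tp Z potential_outcome.
Proof.
move=> b t z B mB; have := @indep (if b then setT else B) (if b then B else setT) t z.
have -> : [set w | (if b then setT else B) (Y0 w) /\ (if b then B else setT) (Y1 w) /\ Tp w = t] =
    potential_outcome b @^-1` B `&` [set w | Tp w = t].
  by case: b; apply/seteqP; split => [w /= [? []] | w /= []].
by apply; case: b.
Qed.

Lemma instrument_independent_treatment : instrument_independent P Tp Z potential_treatment.
Proof.
move=> b t z B _; rewrite (preimage_cst (b%:R : R) B : potential_treatment b @^-1` B = _).
by case: ifP => _; rewrite ?setTI ?pr_type_instrument // !set0I measure0 mul0e.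
Qed.

Lemma mean_on_type_outcome t :
  mean_on_type P Tp potential_outcome t true - mean_on_type P Tp potential_outcome t false =
  theta P Tp t * LATE P Y0 Y1 Tp t.
Proof.
have iYt (Y : T -> R) : P.-integrable setT (EFin \o Y) ->
    P.-integrable [set w | Tp w = t] (EFin \o Y) := integrableS measurableT (mTp t) (subsetT _).
have -> : mean_on_type P Tp potential_outcome t true - mean_on_type P Tp potential_outcome t false =
    (\int[P]_(w in [set w | Tp w = t]) (Y1 w - Y0 w))%R.
  exact: esym (RintegralB (mTp t) (iYt _ iY1) (iYt _ iY0)).
rewrite /LATE /condE -/(theta P Tp t).
have [theta0 | theta_neq0] := eqVneq (theta P Tp t) 0; last by rewrite mulrC divfK.
have P0 : P [set w | Tp w = t] = 0%E.
  by apply/eqP; rewrite -fine_eq0 ?fin_num_measure //; apply/eqP; exact: theta0.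
rewrite theta0 mul0r /Rintegral null_set_integral //.
by apply/measurable_EFinP/measurable_funTS; exact: measurable_funB.
Qed.

Lemma mean_on_type_treatment t b :
  mean_on_type P Tp potential_treatment t b = b%:R * theta P Tp t.
Proof.
by rewrite /mean_on_type (integral_cst P (mTp t) b%:R%:E) fineM ?fin_num_measure.
Qed.

Lemma Wald_decomposition l :
  0 < p_ P Z l -> 0 < pr P (Zl0 Z l) -> 0 < pi_ P Tp Z l ->
  Wald P Y0 Y1 Tp Z l = \sum_(t : ctype) LATE P Y0 Y1 Tp t * alpha P Tp Z t l /\
  \sum_(t : ctype) alpha P Tp Z t l = 1.
Proof.
move=> /lt0r_neq0 pr1_neq0 /lt0r_neq0 pr0_neq0 /lt0r_neq0 pi_neq0.
have rhoE : rho_ P Y0 Y1 Tp Z l = \sum_(t : ctype) theta P Tp t * LATE P Y0 Y1 Tp t * phi P Z t l.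
  rewrite /rho_ YobsE (condE_obs_contrast mTp mZ _ _ instrument_independent_outcome) //.
  - by apply: eq_bigr => t _; rewrite mean_on_type_outcome.
  - by case.
  - by case.
have piE : pi_ P Tp Z l = \sum_(t : ctype) theta P Tp t * phi P Z t l.
  rewrite /pi_ (condE_obs_contrast mTp mZ _ _ instrument_independent_treatment) //.
  - by apply: eq_bigr => t _; rewrite !mean_on_type_treatment mul1r mul0r subr0.
  - by move=> b; exact: measurable_cst.
  - by move=> b; exact: finite_measure_integrable_cst.
split; last by rewrite /alpha -mulr_suml -piE divff.
rewrite /Wald rhoE mulr_suml; apply: eq_bigr => t _.
by rewrite /alpha [theta P Tp t * _]mulrC -!mulrA.
Qed.

End wald_estimand.

Theorem proposition1 (d : measure_display) (T : measurableType d) (R : realType)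
  (P : probability T R) (L : nat)
  (Y0 Y1 : T -> R) (Tp : T -> {ffun {ffun 'I_L -> bool} -> bool})
  (Z : T -> {ffun 'I_L -> bool}) :
  (2 <= L)%N ->
  measurable_fun setT Y0 -> measurable_fun setT Y1 ->
  (forall t, measurable [set w | Tp w = t]) ->
  (forall z, measurable [set w | Z w = z]) ->
  P.-integrable setT (EFin \o Y0) -> P.-integrable setT (EFin \o Y1) ->
  indepA1 P Y0 Y1 Tp Z ->
  monotoneA2 Tp ->
  (forall l : 'I_L, 0 < p_ P Z l /\ 0 < pi_ P Tp Z l) ->
  posdef (SigmaZ P Z) ->
  forall l : 'I_L,
    Wald P Y0 Y1 Tp Z l =
      \sum_(t : {ffun {ffun 'I_L -> bool} -> bool})
         LATE P Y0 Y1 Tp t * alpha P Tp Z t l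
    /\ \sum_(t : {ffun {ffun 'I_L -> bool} -> bool}) alpha P Tp Z t l = 1.
Proof.
move=> _ mY0 mY1 mTp mZ iY0 iY1 indep _ pos pd l.
have [p1_gt0 pi_gt0] := pos l.
exact: Wald_decomposition mY0 mY1 mTp mZ iY0 iY1 indep l p1_gt0 (pr_Zl0_gt0 l mZ pd) pi_gt0.
Qed.
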